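(* If $M$ is a simple rank-$r$ matroid with no $2$-claw, then $|E(M)| \ge 2^r-1$. If equality holds then $M \cong \mathrm{PG}(r-1,2)$.
   Context: A claw of a matroid $M$ is a set that is both a flat and an independent set of $M$; a $k$-claw is a claw of size $k$. $\mathrm{PG}(r-1,2)$ is the rank-$r$ binary projective geometry. *)

(* Matroids on a finite ground set (the finType T itself). *)
From HB Require Import structures.
From mathcomp Require Import all_boot all_order all_algebra.
Set Implicit Arguments. Unset Strict Implicit. Unset Printing Implicit Defensive.
Import GRing.Theory.

Record matroid (T : finType) := Matroid {
  indep : {set T} -> bool;
  indep0 : indep set0;
  indep_sub : forall A B : {set T}, B \subset A -> indep A -> indep B;
  indep_aug : forall A B : {set T}, indep A -> indep B -> #|A| < #|B| ->
      exists2 x, x \in B :\: A & indep (x |: A)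
}.

Definition mrank (T : finType) (M : matroid T) (A : {set T}) : nat :=
  \max_(B : {set T} | (B \subset A) && indep M B) #|B|.

Definition mrankM (T : finType) (M : matroid T) : nat := mrank M setT.

(* simple: no loops and no parallel pairs (all sets of size <= 2 independent) *)
Definition simple (T : finType) (M : matroid T) : Prop :=
  forall A : {set T}, #|A| <= 2 -> indep M A.

Definition flat (T : finType) (M : matroid T) (F : {set T}) : Prop :=
  forall x, x \notin F -> mrank M F < mrank M (x |: F).

Definition claw (T : finType) (M : matroid T) (C : {set T}) : Prop :=
  flat M C /\ indep M C.

Definition kclaw (T : finType) (M : matroid T) (k : nat) (C : {set T}) : Prop :=
  claw M C /\ #|C| = k.

(* M is isomorphic to PG(r-1,2), the vector matroid over GF(2) on the set of
   nonzero vectors of GF(2)^r: there is a bijection f from E(M) onto the nonzero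
   row vectors of 'F_2^r sending independent sets exactly to linearly
   independent sets. *)
Definition iso_PG (T : finType) (M : matroid T) (r : nat) : Prop :=
  exists f : T -> 'rV['F_2]_r,
    [/\ injective f,
        (forall x, f x != 0%R),
        (forall v : 'rV['F_2]_r, v != 0%R -> exists x, f x = v) &
        (forall A : {set T}, indep M A = free [seq f x | x <- enum A])].

From HB Require Import structures.
From mathcomp Require Import all_boot all_order all_algebra zify.
Set Implicit Arguments. Unset Strict Implicit. Unset Printing Implicit Defensive.
Import GRing.Theory.

(* Let B be independent and x outside cl B. For y in cl B the independent pair
   {x, y} is not a 2-claw, hence not a flat, so the line cl {x, y} has a third
   point x + y. These points lie in cl (B u {x}) but not in cl B, are pairwise
   distinct and differ from x, so |cl (B u {x})| >= 2 |cl B| + 1; by induction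
   |cl B| >= 2^|B| - 1.
   If |E| = 2^r - 1 all these bounds are tight: cl (B u {x}) is exactly
   cl B u {x} u (x + cl B), and every line has exactly three points. Adjoining a
   zero, the operation + makes E an elementary abelian 2-group (associativity is
   checked inside a plane) whose spans are the closures, and coordinates in a
   basis give the isomorphism with PG(r-1,2). *)

Section Closure.
Variables (T : finType) (M : matroid T).
Local Notation rk := (mrank M).

Lemma mrank_le_card (A : {set T}) : rk A <= #|A|.
Proof. by apply/bigmax_leqP => B /andP[sBA _]; apply: subset_leq_card. Qed.

Lemma indep_card_le_mrank (A B : {set T}) : B \subset A -> indep M B -> #|B| <= rk A.
Proof.
by move=> sBA iB; apply: (@leq_bigmax_cond _ (fun C : {set T} => _ && _)); rewrite sBA.
Qed.

Lemma mrank_basis (A : {set T}) :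
  exists2 B : {set T}, (B \subset A) && indep M B & #|B| = rk A.
Proof.
have PB0 : (set0 \subset A) && indep M set0 by rewrite sub0set indep0.
have [B /andP[sBA iB] maxB] :=
  @arg_maxnP _ set0 (fun B : {set T} => (B \subset A) && indep M B) (fun B => #|B|) PB0.
exists B; first by rewrite sBA.
apply/eqP; rewrite eqn_leq indep_card_le_mrank //=.
by apply/bigmax_leqP => C; apply: maxB.
Qed.

Lemma mrankS (A A' : {set T}) : A \subset A' -> rk A <= rk A'.
Proof.
move=> sAA'; have [B /andP[sBA iB] <-] := mrank_basis A.
exact: indep_card_le_mrank (subset_trans sBA sAA') iB.
Qed.

Lemma indep_mrank (A : {set T}) : indep M A -> rk A = #|A|.
Proof. by move=> iA; apply/eqP; rewrite eqn_leq mrank_le_card indep_card_le_mrank. Qed.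

Lemma mrank0 : rk set0 = 0.
Proof. by apply/eqP; rewrite -leqn0 -(cards0 T) mrank_le_card. Qed.

Lemma mrankU1 (A : {set T}) x : rk (x |: A) <= (rk A).+1.
Proof.
have [W /andP[sW iW] <-] := mrank_basis (x |: A).
have : #|W :\ x| <= rk A.
  apply: indep_card_le_mrank (indep_sub (subD1set W x) iW).
  by rewrite subDset.
by rewrite (cardsD1 x W); case: (x \in W); lia.
Qed.

Lemma basis_extend (A B : {set T}) : B \subset A -> indep M B ->
  exists2 B' : {set T}, (B \subset B') && (B' \subset A) & indep M B' && (#|B'| == rk A).
Proof.
move=> sBA iB; move def_n: (rk A - #|B|) => n.
elim: n B sBA iB def_n => [|n IH] B sBA iB def_n.
  exists B; rewrite ?subxx ?sBA ?iB //=.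
  by have := indep_card_le_mrank sBA iB; lia.
have [W /andP[sWA iW] cW] := mrank_basis A.
have /(indep_aug iB iW)[x /setDP[xW xB] ixB] : #|B| < #|W| by lia.
have [||B' /andP[sxB' sB'A] iB'] := IH (x |: B) _ ixB.
- by rewrite subUset sub1set (subsetP sWA x xW) sBA.
- by rewrite cardsU1 xB; lia.
by exists B'; rewrite // sB'A (subset_trans (subsetUr _ _) sxB').
Qed.

Definition cl (A : {set T}) : {set T} := [set x | rk (x |: A) <= rk A].

Lemma clE (A : {set T}) x : (x \in cl A) = (rk (x |: A) <= rk A).
Proof. by rewrite inE. Qed.

Lemma notin_cl_basis (A B : {set T}) y : B \subset A -> indep M B -> #|B| = rk A ->
  (y \notin cl A) = (y \notin B) && indep M (y |: B).
Proof.
move=> sBA iB cB; apply/idP/andP => [|[yB iyB]]; last first.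
  rewrite clE -ltnNge -cB.
  by have := indep_card_le_mrank (setUS [set y] sBA) iyB; rewrite cardsU1 yB.
rewrite clE -ltnNge => ltA.
have [W /andP[sW iW] cW] := mrank_basis (y |: A).
have /(indep_aug iB iW)[z /setDP[zW zB] izB] : #|B| < #|W| by rewrite cW cB.
case/setU1P: (subsetP sW z zW) => [<- //|zA].
have := indep_card_le_mrank (_ : z |: B \subset A) izB.
by rewrite subUset sub1set zA sBA cardsU1 zB cB => /(_ isT); lia.
Qed.

Lemma subset_cl (A : {set T}) : A \subset cl A.
Proof. by apply/subsetP => x xA; rewrite clE (setUidPr _) // sub1set. Qed.

Lemma clS (A A' : {set T}) : A \subset A' -> cl A \subset cl A'.
Proof.
move=> sAA'; apply/subsetP => y; apply: contraLR => yA'.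
have [B /andP[sB iB] cB] := mrank_basis A.
have [B' /andP[sBB' sB'A'] /andP[iB' /eqP cB']] := basis_extend (subset_trans sB sAA') iB.
move: yA'; rewrite (notin_cl_basis y sB'A' iB' cB') (notin_cl_basis y sB iB cB).
case/andP=> yB' iyB'; rewrite (contra (subsetP sBB' y) yB').
exact: indep_sub (setUS _ sBB') iyB'.
Qed.

Lemma mrank_clU (A X : {set T}) : X \subset cl A -> rk (A :|: X) = rk A.
Proof.
move=> sX; apply/eqP; rewrite eqn_leq andbC mrankS ?subsetUl //=.
have [B /andP[sB iB] cB] := mrank_basis A.
have [B' /andP[sBB' sB'AX] /andP[iB' /eqP <-]] :=
  basis_extend (subset_trans sB (subsetUl A X)) iB.
rewrite -cB leqNgt; apply/negP => ltBB'.
have /subsetPn[z zB' zB] : ~~ (B' \subset B).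
  by apply: contraTN ltBB' => /subset_leq_card; rewrite -leqNgt.
have : z \in cl A.
  by case/setUP: (subsetP sB'AX z zB') => [/(subsetP (subset_cl A))|/(subsetP sX)].
apply/negP; rewrite (notin_cl_basis z sB iB cB) zB.
by apply: indep_sub iB'; rewrite subUset sub1set zB' sBB'.
Qed.

Lemma cl_subset_cl (A S : {set T}) : S \subset cl A -> cl S \subset cl A.
Proof.
move=> sS; apply/subsetP => y /(subsetP (clS (subsetUr A S))).
rewrite !clE (mrank_clU sS); apply: leq_trans.
by apply: mrankS; rewrite setUS // subsetUl.
Qed.

Lemma cl_basis (X B : {set T}) : B \subset X -> indep M B -> #|B| = rk X -> cl X = cl B.
Proof.
move=> sBX iB cB; apply/eqP; rewrite eqEsubset andbC clS //=; apply: cl_subset_cl.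
apply/subsetP => x xX; rewrite clE (indep_mrank iB) cB.
by apply: mrankS; rewrite subUset sub1set xX.
Qed.

Lemma clU1_eq (X Y : {set T}) a : cl X = cl Y -> cl (a |: X) = cl (a |: Y).
Proof.
have sub X' Y' : cl X' = cl Y' -> cl (a |: X') \subset cl (a |: Y').
  move=> eXY; apply: cl_subset_cl; rewrite subUset.
  rewrite (subset_trans (subsetUl _ _) (subset_cl _)).
  by rewrite (subset_trans (subset_cl _)) // eXY clS // subsetUr.
by move=> eXY; apply/eqP; rewrite eqEsubset !sub.
Qed.

Lemma cl_exchange (S : {set T}) x t :
  t \in cl (x |: S) -> t \notin cl S -> x \in cl (t |: S).
Proof.
rewrite !clE -ltnNge setUCA => txS ltS; apply: leq_trans txS _.
exact: leq_trans (mrankU1 S x) ltS.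
Qed.

Lemma indep_notin_clD1 (A : {set T}) a : indep M A -> a \in A -> a \notin cl (A :\ a).
Proof.
move=> iA aA; rewrite clE setD1K // -ltnNge (indep_mrank iA).
by rewrite (indep_mrank (indep_sub (subD1set A a) iA)) (cardsD1 a A) aA.
Qed.

Lemma indepU1 (A : {set T}) a :
  a \notin A -> indep M (a |: A) = indep M A && (a \notin cl A).
Proof.
move=> aA; apply/idP/andP => [iaA|[iA]].
  have iA := indep_sub (subsetUr [set a] A) iaA; split=> //.
  by have := indep_notin_clD1 iaA (setU11 a A); rewrite setU1K.
by rewrite (notin_cl_basis a (subxx A) iA (esym (indep_mrank iA))) aA.
Qed.

End Closure.

Lemma F2_cases (c : 'F_2) : c = 0%R \/ c = 1%R.
Proof. by case: c => [[|[|m]] // c_lt]; [left|right]; apply: val_inj. Qed.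

Lemma addrr_F2 n (v : 'rV['F_2]_n) : (v + v = 0)%R.
Proof. by apply/rowP => i; rewrite !mxE addrr_pchar2 // pchar_Fp. Qed.

Lemma memv_add_line_F2 n (w : 'rV['F_2]_n) (U : {vspace 'rV['F_2]_n}) u :
  (u \in (<[w]> + U)%VS) = (u \in U) || (u + w \in U)%R.
Proof.
apply/memv_addP/orP => [[_ /vlineP[k ->] [y yU ->]]|[uU|uwU]].
- case: (F2_cases k) => ->; first by rewrite scale0r add0r; left.
  by rewrite scale1r; right; rewrite addrC addrA addrr_F2 add0r.
- by exists 0%R; [apply: mem0v | exists u; rewrite ?add0r].
- exists w; first exact: memv_line.
  by exists (u + w)%R; rewrite // addrC -addrA addrr_F2 addr0.
Qed.

Section Lines.
Variables (T : finType) (M : matroid T).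
Hypothesis simpleM : simple M.
Hypothesis no2claw : forall C : {set T}, ~ kclaw M 2 C.
Local Notation rk := (mrank M).
Local Notation cl := (cl M).

Lemma indep1 x : indep M [set x].
Proof. by apply: simpleM; rewrite cards1. Qed.

Lemma indep2 x y : indep M [set x; y].
Proof. by apply: simpleM; rewrite cards2; case: (x != y). Qed.

Lemma cl0 : cl set0 = set0.
Proof.
by apply/setP => x; rewrite clE setU0 (indep_mrank (indep1 x)) cards1 mrank0 inE.
Qed.

Lemma cl1 y : cl [set y] = [set y].
Proof.
apply/setP => x; rewrite clE in_set1.
have [->|xy] := eqVneq x y; first by rewrite setUid leqnn.
by rewrite (indep_mrank (indep2 x y)) (indep_mrank (indep1 y)) cards2 xy cards1.
Qed.

(* A point of the line [cl [set a; b]] other than [a] and [b]; for [a != b] it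
   exists because the independent set [[set a; b]] is not a 2-claw, hence not a
   flat. *)
Definition third a b : T :=
  odflt a [pick c | (c \in cl [set a; b]) && (c \notin [set a; b])].

Lemma thirdP a b : a != b ->
  (third a b \in cl [set a; b]) && (third a b \notin [set a; b]).
Proof.
move=> ab; rewrite /third; case: pickP => [c //|none]; exfalso.
apply: (no2claw (C := [set a; b])); split; last by rewrite cards2 ab.
split; last exact: indep2.
by move=> x xab; rewrite ltnNge -clE; move: (none x); rewrite /= xab andbT => ->.
Qed.

Lemma third_cl a b : a != b -> third a b \in cl [set a; b].
Proof. by case/thirdP/andP. Qed.

Lemma third_neq a b : a != b -> (third a b != a) && (third a b != b).
Proof. by case/thirdP/andP => _; rewrite !inE negb_or. Qed.

Lemma thirdC a b : third a b = third b a.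
Proof.
have [->//|ab] := eqVneq a b.
rewrite /third setUC; case: pickP => // none.
by move: (thirdP ab); rewrite /third setUC; case: pickP => // c; rewrite none.
Qed.

Lemma cl2_subset a b X : a \in cl X -> b \in cl X -> cl [set a; b] \subset cl X.
Proof. by move=> aX bX; apply: cl_subset_cl; rewrite subUset !sub1set aX bX. Qed.

Definition cone x (F : {set T}) : {set T} := F :|: (x |: [set third x y | y in F]).

Section Growth.
Variables (B : {set T}) (x : T).
Hypothesis xB : x \notin cl B.

Lemma neq_notin_cl y : y \in cl B -> x != y.
Proof. by apply: contraTneq => <-. Qed.

Lemma cone_subset_clU1 : cone x (cl B) \subset cl (x |: B).
Proof.
have clB_sub : cl B \subset cl (x |: B) by apply: clS; apply: subsetUr.
have x_cl : x \in cl (x |: B) by apply: (subsetP (subset_cl M _)); apply: setU11.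
rewrite !subUset clB_sub sub1set x_cl /=.
apply/subsetP => _ /imsetP[y yB ->].
have xy_sub := cl2_subset x_cl (subsetP clB_sub y yB).
exact: subsetP xy_sub _ (third_cl (neq_notin_cl yB)).
Qed.

Lemma third_notin_cl y : y \in cl B -> third x y \notin cl B.
Proof.
move=> yB; have xy := neq_notin_cl yB; apply: contra xB => tB.
have ty_notin : third x y \notin cl [set y].
  by rewrite cl1 in_set1; case/andP: (third_neq xy).
apply: subsetP (cl2_subset tB yB) _ (cl_exchange (third_cl xy) ty_notin).
Qed.

Lemma third_inj : {in cl B &, injective (third x)}.
Proof.
move=> y y' yB y'B exy; apply/eqP; move: xB; apply: contraNT => yy'.
have xy := neq_notin_cl yB; set c := third x y in exy.
have c_xy : c \in cl [set x; y] := third_cl xy.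
have c_y'x : c \in cl [set y'; x] by rewrite setUC exy; apply: third_cl (neq_notin_cl y'B).
have c_notin : c \notin cl [set x] by rewrite cl1 in_set1; case/andP: (third_neq xy).
have y'_xy : y' \in cl [set x; y].
  apply: subsetP (cl2_subset c_xy _) _ (cl_exchange c_y'x c_notin).
  exact: subsetP (subset_cl M _) _ (setU11 _ _).
have y'_notin : y' \notin cl [set y] by rewrite cl1 in_set1 eq_sym.
apply: subsetP (cl2_subset y'B yB) _ (cl_exchange y'_xy y'_notin).
Qed.

Lemma card_cone : #|cone x (cl B)| = (#|cl B|).*2.+1.
Proof.
have x_notin : x \notin [set third x y | y in cl B].
  by apply/imsetP => -[y /neq_notin_cl xy ex]; case/andP: (third_neq xy); rewrite -ex eqxx.
have disj : [disjoint cl B & x |: [set third x y | y in cl B]].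
  rewrite -setI_eq0 -subset0; apply/subsetP => z /setIP[zB].
  case/setU1P => [ezx|/imsetP[y yB ezy]]; first by move: xB; rewrite -ezx zB.
  by move: (third_notin_cl yB); rewrite -ezy zB.
rewrite /cone (eqP (etrans (leq_card_setU _ _).2 disj)) cardsU1 x_notin card_in_imset //.
  by rewrite -addnn; lia.
exact: third_inj.
Qed.

Lemma card_clU1 : (#|cl B|).*2.+1 <= #|cl (x |: B)|.
Proof. by rewrite -card_cone subset_leq_card // cone_subset_clU1. Qed.

End Growth.

Lemma card_cl_extend (B B' : {set T}) : indep M B' -> B \subset B' ->
  2 ^ (#|B'| - #|B|) * (#|cl B|).+1 <= (#|cl B'|).+1.
Proof.
move def_n: (#|B'| - #|B|) => n; elim: n B' def_n => [|n IH] B' def_n iB' sBB'.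
  by rewrite mul1n (_ : B = B') //; apply/eqP; rewrite eqEcard sBB'; lia.
have /subsetPn[z zB' zB] : ~~ (B' \subset B) by apply/negP => /subset_leq_card; lia.
have sBB'z : B \subset B' :\ z.
  apply/subsetP => y yB; rewrite in_setD1 (subsetP sBB' y yB) andbT.
  by apply: contraNneq zB => <-.
have cBz : #|B' :\ z| - #|B| = n by move: def_n; rewrite (cardsD1 z B') zB'; lia.
have := IH _ cBz (indep_sub (subD1set B' z) iB') sBB'z.
have := card_clU1 (indep_notin_clD1 iB' zB'); rewrite setD1K //.
by rewrite expnS -mulnA; lia.
Qed.

Lemma exp2_card_le_cl (B : {set T}) : indep M B -> 2 ^ #|B| <= (#|cl B|).+1.
Proof.
move=> iB; have := card_cl_extend iB (sub0set B).
by rewrite cards0 cl0 cards0 muln1 subn0.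
Qed.

Lemma exp2_mrank_le_card : 2 ^ rk setT - 1 <= #|T|.
Proof.
have [B /andP[_ iB] <-] := mrank_basis M setT.
have : #|cl B| <= #|T| := max_card _.
by have := exp2_card_le_cl iB; lia.
Qed.

(* Points of [T] together with a zero [None]: [addo a b] is the third point of
   the line [ab], and [in_span X u] says that [u] lies in the span of [X]. *)
Definition addo (u v : option T) : option T :=
  match u, v with
  | None, _ => v
  | _, None => u
  | Some a, Some b => if a == b then None else Some (third a b)
  end.

Lemma add0o : left_id None addo.
Proof. by []. Qed.

Lemma addo0 : right_id None addo.
Proof. by case. Qed.

Lemma addoC : commutative addo.
Proof. by case=> [a|] [b|] //=; rewrite eq_sym thirdC. Qed.

Lemma addoo u : addo u u = None.
Proof. by case: u => //= a; rewrite eqxx. Qed.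

Lemma addo_Some a b : a != b -> addo (Some a) (Some b) = Some (third a b).
Proof. by move=> ab; rewrite /= (negbTE ab). Qed.

Definition in_span (X : {set T}) (u : option T) : bool :=
  if u is Some y then y \in cl X else true.

Lemma in_span_Some (X : {set T}) y : y \in X -> in_span X (Some y).
Proof. exact: subsetP (subset_cl M X) y. Qed.

Lemma in_spanS (X Y : {set T}) u : X \subset Y -> in_span X u -> in_span Y u.
Proof. by case: u => //= y /clS /subsetP; apply. Qed.

Lemma in_span_add (X : {set T}) u v : in_span X u -> in_span X v -> in_span X (addo u v).
Proof.
case: u v => [a|] [b|] //= aX bX; have [//|ab] := eqVneq a b.
exact: subsetP (cl2_subset aX bX) _ (third_cl ab).
Qed.

Lemma in_span_big (I : Type) (r : seq I) (P : pred I) (F : I -> option T) (X : {set T}) :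
  (forall i, P i -> in_span X (F i)) -> in_span X (\big[addo/None]_(i <- r | P i) F i).
Proof. exact: (@big_ind _ (fun u => in_span X u) None addo isT (@in_span_add X)). Qed.

Section Extremal.
Hypothesis card_T : #|T| = 2 ^ rk setT - 1.

Lemma card_cl_indep (B : {set T}) : indep M B -> #|cl B| = 2 ^ #|B| - 1.
Proof.
move=> iB; have [B' /andP[sBB' _] /andP[iB' /eqP cB']] := basis_extend (subsetT B) iB.
have : (#|cl B|).+1 <= 2 ^ #|B|.
  rewrite -(leq_pmul2l (expn_gt0 2 (#|B'| - #|B|))) -expnD subnK ?subset_leq_card //.
  apply: leq_trans (card_cl_extend iB' sBB') _.
  have : #|cl B'| <= #|T| := max_card _.
  by rewrite card_T cB'; have := expn_gt0 2 (rk setT); lia.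
by have := exp2_card_le_cl iB; lia.
Qed.

Lemma clU1_cone (X : {set T}) x : x \notin cl X -> cl (x |: X) = cone x (cl X).
Proof.
have [B /andP[sBX iB] cB] := mrank_basis M X.
rewrite (clU1_eq x (cl_basis sBX iB cB)) (cl_basis sBX iB cB) => xB.
have ixB : indep M (x |: B).
  by rewrite indepU1 ?iB ?xB // (contra (subsetP (subset_cl M B) x)).
apply/eqP; rewrite eq_sym eqEcard cone_subset_clU1 //= card_cone //.
rewrite (card_cl_indep ixB) (card_cl_indep iB) cardsU1.
rewrite (contra (subsetP (subset_cl M B) x)) // expnS.
by have := expn_gt0 2 #|B|; lia.
Qed.

Lemma cl2_third a b y : a != b -> y \in cl [set a; b] ->
  [|| y == a, y == b | y == third a b].
Proof.
move=> ab; have b_notin : b \notin cl [set a] by rewrite cl1 in_set1 eq_sym.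
by rewrite setUC (clU1_cone b_notin) cl1 /cone imset_set1 thirdC !inE.
Qed.

Lemma third_uniq a b y : a != b -> y \in cl [set a; b] -> y != a -> y != b ->
  y = third a b.
Proof.
by move=> ab /(cl2_third ab) /or3P[/eqP->|/eqP->|/eqP->]; rewrite ?eqxx.
Qed.

Lemma thirdK a b : a != b -> third a (third a b) = b.
Proof.
move=> ab; have /andP[ca cb] := third_neq ab.
have b_cl : b \in cl [set a; third a b].
  have c_bA : third a b \in cl (b |: [set a]) by rewrite setUC; apply: third_cl.
  have c_notin : third a b \notin cl [set a] by rewrite cl1 in_set1.
  by rewrite setUC; apply: cl_exchange c_bA c_notin.
by rewrite -(third_uniq _ b_cl) // eq_sym.
Qed.

Lemma addoK u : cancel (addo u) (addo u).
Proof.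
case: u => [a|] [b|] //=; rewrite ?eqxx //.
have [<-//|ab] := eqVneq a b.
have /andP[ca _] := third_neq ab.
by rewrite /= eq_sym (negbTE ca) thirdK.
Qed.

Lemma addoA_noncollinear a b c : a != b -> c \notin cl [set a; b] ->
  addo (Some a) (addo (Some b) (Some c)) = addo (addo (Some a) (Some b)) (Some c).
Proof.
move=> ab cF; set F := cl [set a; b]; set G := c |: [set a; b].
have [aF bF] : a \in F /\ b \in F by split; apply: in_span_Some; rewrite !inE eqxx ?orbT.
have [aG bG cG] : [/\ a \in cl G, b \in cl G & c \in cl G].
  by split; apply: in_span_Some; rewrite !inE eqxx ?orbT.
have [ac bc] : a != c /\ b != c by split; apply: contraNneq cF => <-.
have ab_c : third a b != c by apply: contraNneq cF => <-; apply: third_cl.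
set w := third b c; have wF : w \notin F by rewrite /w thirdC; apply: third_notin_cl.
have aw : a != w by apply: contraNneq wF => <-.
rewrite !addo_Some //; congr Some.
(* [p] lies in the plane [cone c F] but off the line [F], so [p = third c y] for
   a point [y] of [F]; only [y = third a b] survives. *)
set p := third a w; have pF : p \notin F by rewrite /p thirdC; apply: third_notin_cl.
have : p \in cl G.
  have wG : w \in cl G := subsetP (cl2_subset bG cG) _ (third_cl bc).
  exact: subsetP (cl2_subset aG wG) _ (third_cl aw).
rewrite (clU1_cone cF) /cone in_setU (negbTE pF) in_setU1 /=.
case/orP => [/eqP pc|/imsetP[y yF py]].
  have ewa : w = third c a by rewrite -(thirdK aw) -/p pc thirdC.
  have [cb ca] : c != b /\ c != a by rewrite !(eq_sym c).
  by move: ab; rewrite -(thirdK cb) -(thirdK ca) -ewa (thirdC c b) -/w eqxx.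
case/or3P: (cl2_third ab yF) => /eqP ey; rewrite ey in py.
- have wc : w = c by rewrite -(thirdK aw) -/p py (thirdC c a) thirdK.
  by case/andP: (third_neq bc) => _; rewrite -/w wc eqxx.
- by case/andP: (third_neq aw) => _; rewrite -/p py thirdC -/w eqxx.
- by rewrite -/p py thirdC.
Qed.

Lemma addoA : associative addo.
Proof.
case=> [a|] [b|] [c|] //; rewrite ?addo0 //.
have [<-|ab] := eqVneq a b; first by rewrite addoo addoK.
have [<-|bc] := eqVneq b c; first by rewrite addoo addo0 addoC (addoC (Some a)) addoK.
have [<-|ac] := eqVneq a c; first by rewrite (addoC (Some b)) addoK addoC addoK.
have [cF|cF] := boolP (c \in cl [set a; b]); last exact: addoA_noncollinear.
have ec : c = third a b by apply: third_uniq; rewrite // eq_sym.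
have bca : third b c = a by rewrite ec (thirdC a b) thirdK // eq_sym.
by rewrite (addo_Some bc) bca (addo_Some ab) -ec !addoo.
Qed.

Lemma in_spanU1 (X : {set T}) a u :
  in_span (a |: X) u = in_span X u || in_span X (addo (Some a) u).
Proof.
apply/idP/orP => [|[|]]; last 2 first.
- exact/in_spanS/subsetUr.
- move=> aXu; rewrite -(addoK (Some a) u).
  exact: in_span_add (in_span_Some (setU11 a X)) (in_spanS (subsetUr _ _) aXu).
case: u => [y yaX|]; last by left.
have [aX|aX] := boolP (a \in cl X).
  by left; apply: subsetP (cl_subset_cl _) _ yaX; rewrite subUset sub1set aX subset_cl.
have : y \in cl (a |: X) := yaX; rewrite (clU1_cone aX) /cone in_setU in_setU1.
case/or3P => [yX|/eqP->|/imsetP[z zX ->]]; [by left | by right; rewrite addoo |].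
by right; rewrite -(addo_Some (neq_notin_cl aX zX)) addoK.
Qed.

HB.instance Definition _ := Monoid.isComLaw.Build (option T) None addo addoA addoC add0o.

Section Coordinates.
Variable B : {set T}.
Hypotheses (iB : indep M B) (cB : #|B| = rk setT).

Definition coord_pt (c : 'F_2) (i : 'I_#|B|) : option T :=
  if c == 1%R then Some (enum_val i) else None.

Definition pt_of_vec (v : 'rV['F_2]_#|B|) : option T :=
  \big[addo/None]_(i < #|B|) coord_pt (v 0%R i) i.

Lemma coord_ptD c d i : coord_pt (c + d)%R i = addo (coord_pt c i) (coord_pt d i).
Proof.
by rewrite /coord_pt; case: (F2_cases c) (F2_cases d) => -> [] -> /=; rewrite ?eqxx.
Qed.

Lemma pt_of_vecD u v : pt_of_vec (u + v)%R = addo (pt_of_vec u) (pt_of_vec v).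
Proof. by rewrite /pt_of_vec -big_split; apply: eq_bigr => i _; rewrite mxE coord_ptD. Qed.

Lemma pt_of_vec0 : pt_of_vec 0%R = None.
Proof. by rewrite /pt_of_vec big1 // => i _; rewrite mxE. Qed.

Lemma pt_of_vec_eq0 v : pt_of_vec v = None -> v = 0%R.
Proof.
move=> v0; apply/rowP => i; rewrite mxE.
case: (F2_cases (v 0%R i)) => // vi; exfalso.
move: v0; rewrite /pt_of_vec (bigD1 i) //= {1}/coord_pt vi eqxx.
set rest := \big[addo/None]_(j | j != i) _ => e.
have : in_span (B :\ enum_val i) rest.
  apply: in_span_big => j ji; rewrite /coord_pt; case: ifP => // _; apply: in_span_Some.
  by rewrite in_setD1 enum_valP andbT (inj_eq enum_val_inj).
rewrite -(addoK (Some (enum_val i)) rest) e /=; apply/negP.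
exact: indep_notin_clD1 iB (enum_valP i).
Qed.

Lemma pt_of_vec_inj : injective pt_of_vec.
Proof.
move=> u v e; have uv0 : (u + v = 0)%R by apply: pt_of_vec_eq0; rewrite pt_of_vecD e addoo.
by rewrite -[u]addr0 -(addrr_F2 v) addrA uv0 add0r.
Qed.

Lemma pt_of_vec_bij : bijective pt_of_vec.
Proof.
apply: (@inj_card_bij _ _ _ pt_of_vec_inj).
rewrite card_option card_mx card_Fp // mul1n card_T -cB.
by have := expn_gt0 2 #|B|; lia.
Qed.

Section Inverse.
Variable vec_of_pt : option T -> 'rV['F_2]_#|B|.
Hypothesis vec_of_ptK : cancel vec_of_pt pt_of_vec.

Lemma memv_span_pt (s : seq T) u :
  (u \in <<[seq vec_of_pt (Some x) | x <- s]>>%VS) = in_span [set x in s] (pt_of_vec u).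
Proof.
elim: s u => [|a s IHs] u /=.
  rewrite span_nil memv0 set_nil; case e: (pt_of_vec u) => [y|] /=.
    by rewrite cl0 inE; apply: contraTF isT => /eqP u0; rewrite u0 pt_of_vec0 in e.
  by rewrite (pt_of_vec_eq0 e) eqxx.
by rewrite span_cons memv_add_line_F2 set_cons in_spanU1 !IHs pt_of_vecD vec_of_ptK addoC.
Qed.

Lemma indep_free (s : seq T) : uniq s ->
  indep M [set x in s] = free [seq vec_of_pt (Some x) | x <- s].
Proof.
elim: s => [|a s IHs] /=; first by rewrite set_nil indep0 nil_free.
case/andP => a_notin s_uniq.
rewrite set_cons indepU1; last by rewrite inE.
by rewrite free_cons IHs // memv_span_pt vec_of_ptK andbC.
Qed.

End Inverse.

Lemma iso_PG_basis : iso_PG M #|B|.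
Proof.
have [vec_of_pt pt_of_vecK vec_of_ptK] := pt_of_vec_bij.
exists (fun x => vec_of_pt (Some x)); split.
- by move=> x y /(congr1 pt_of_vec); rewrite !vec_of_ptK => -[].
- by move=> x; apply/eqP => /(congr1 pt_of_vec); rewrite vec_of_ptK pt_of_vec0.
- move=> v v0; case e: (pt_of_vec v) => [x|]; first by exists x; rewrite -e pt_of_vecK.
  by move: v0; rewrite (pt_of_vec_eq0 e) eqxx.
- by move=> A; rewrite -{1}(set_enum A) (indep_free vec_of_ptK) ?enum_uniq.
Qed.

End Coordinates.

End Extremal.

End Lines.

Theorem lemma3p1 (T : finType) (M : matroid T) (r : nat) :
  mrankM M = r -> simple M -> (forall C : {set T}, ~ kclaw M 2 C) ->
  2 ^ r - 1 <= #|T| /\ (#|T| = 2 ^ r - 1 -> iso_PG M r).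
Proof.
move=> <- simpleM no2claw; split; first exact: exp2_mrank_le_card.
move=> card_T; have [B /andP[_ iB] cB] := mrank_basis M setT.
by rewrite /mrankM -cB; apply: iso_PG_basis.
Qed.
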